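(* Let $G$ be a group satisfying the property $\mathsf{FM}$ and $\nu$ a conjugation-invariant pseudo-norm on $G$. Then for any elements $\mathsf{f},\mathsf{g}$ of $A_\nu$, $\mathsf{f}+\mathsf{g}=\mathsf{g}+\mathsf{f}$.
   Context: A conjugation-invariant pseudo-norm on a group $G$ is a function $\nu\colon G\to\mathbb{R}_{\ge0}$ with $\nu(1)=0$, $\nu(f)=\nu(f^{-1})$, $\nu(fg)\le\nu(f)+\nu(g)$ and $\nu(gfg^{-1})=\nu(f)$ for all $f,g\in G$. Property $\mathsf{FM}$: for a subgroup $H\le G$, let $\nu_H(f)$ be the minimal $k$ such that $f=g_1h_1g_1^{-1}\cdots g_kh_kg_k^{-1}$ ($g_i\in G,h_i\in H$), $\infty$ if none; for $K\subset G$ let $\mathrm{D}^f_H(K)$ be the set of $h_0\in G$ such that for all $g_1,\dots,g_k\in G$ there is $h\in G$ with every element of $hh_0h^{-1}K(hh_0h^{-1})^{-1}$ commuting with every element of $\bigcup_i g_iHg_i^{-1}$. $(G,H)$ satisfies $\mathsf{FM}$ if $\nu_H<\infty$ on $G$ and $\mathrm{D}^f_H(h_1Hh_1^{-1}\cup\dots\cup h_kHh_k^{-1})\ne\emptyset$ for all $h_1,\dots,h_k\in G$; $G$ satisfies $\mathsf{FM}$ if some $(G,H)$ does. $A_G=\coprod_{k\ge0}(G\times\mathbb{R})^k$, elements written as formal words $g_1^{s_1}\cdots g_k^{s_k}$, empty word $1$; $\mathtt{g}\cdot\mathtt{h}$ is concatenation, $\bar{\mathtt{g}}=g_k^{-s_k}\cdots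 g_1^{-s_1}$; $\|\mathtt{g}\|_\nu=\lim_{n\to\infty}\frac1n\nu(g_1^{[s_1n]}\cdots g_k^{[s_kn]})$ ($[\cdot]$ integer part), $\|1\|_\nu=0$; $\mathtt{g}\sim\mathtt{h}$ iff $\|\mathtt{g}\cdot\bar{\mathtt{h}}\|_\nu=0$; $A_\nu=A_G/\sim$ with addition $[\mathtt{g}]+[\mathtt{h}]=[\mathtt{g}\cdot\mathtt{h}]$. *)

From Stdlib Require Import Reals List ZArith.
From Coquelicot Require Import Coquelicot.
Open Scope R_scope.

Record Group := {
  gcar :> Type;
  gmul : gcar -> gcar -> gcar;
  ginv : gcar -> gcar;
  gone : gcar;
  gmulA : forall x y z, gmul x (gmul y z) = gmul (gmul x y) z;
  gmul1l : forall x, gmul gone x = x;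
  gmul1r : forall x, gmul x gone = x;
  gmulVl : forall x, gmul (ginv x) x = gone;
  gmulVr : forall x, gmul x (ginv x) = gone
}.

Arguments gmul {g}.
Arguments ginv {g}.
Arguments gone {g}.

Definition gconj {G : Group} (a x : G) : G := gmul a (gmul x (ginv a)).

Definition gcommute {G : Group} (x y : G) : Prop := gmul x y = gmul y x.

Definition gpowZ {G : Group} (g : G) (z : Z) : G :=
  match z with
  | Z0 => gone
  | Zpos p => Nat.iter (Pos.to_nat p) (gmul g) gone
  | Zneg p => ginv (Nat.iter (Pos.to_nat p) (gmul g) gone)
  end.

Definition cinv_pseudonorm (G : Group) (nu : G -> R) : Prop :=
  (forall f, 0 <= nu f) /\
  nu gone = 0 /\
  (forall f, nu f = nu (ginv f)) /\
  (forall f g, nu (gmul f g) <= nu f + nu g) /\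
  (forall f g, nu (gconj g f) = nu f).

Definition is_subgroup (G : Group) (H : G -> Prop) : Prop :=
  H gone /\ (forall x y, H x -> H y -> H (gmul x y)) /\ (forall x, H x -> H (ginv x)).

Definition conj_prod {G : Group} (l : list (G * G)) : G :=
  fold_right (fun p acc => gmul (gconj (fst p) (snd p)) acc) gone l.

(* nu_H(f) < infinity *)
Definition nuH_finite (G : Group) (H : G -> Prop) (f : G) : Prop :=
  exists l : list (G * G), List.Forall (fun p => H (snd p)) l /\ f = conj_prod l.

Definition conj_union {G : Group} (H : G -> Prop) (gs : list G) (y : G) : Prop :=
  exists gi h, In gi gs /\ H h /\ y = gconj gi h.

Definition Df (G : Group) (H : G -> Prop) (K : G -> Prop) (h0 : G) : Prop :=
  forall gs : list G, exists h : G,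
    forall x y, K x -> conj_union H gs y ->
      gcommute (gconj (gconj h h0) x) y.

Definition FM_pair (G : Group) (H : G -> Prop) : Prop :=
  is_subgroup G H /\
  (forall f : G, nuH_finite G H f) /\
  (forall hs : list G, exists h0 : G, Df G H (conj_union H hs) h0).

Definition satisfies_FM (G : Group) : Prop := exists H : G -> Prop, FM_pair G H.

(* A_G : formal words g_1^{s_1} ... g_k^{s_k} *)
Definition word (G : Group) := list (G * R).

Definition wbar {G : Group} (w : word G) : word G :=
  rev (map (fun p => (fst p, - snd p)) w).

Definition weval {G : Group} (w : word G) (n : nat) : G :=
  fold_right (fun p acc => gmul (gpowZ (fst p) (Int_part (snd p * INR n))) acc) gone w.

Definition wnorm_zero (G : Group) (nu : G -> R) (w : word G) : Prop :=
  is_lim_seq (fun n => nu (weval w n) / INR n) 0.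

Definition wsim (G : Group) (nu : G -> R) (w v : word G) : Prop :=
  wnorm_zero G nu (w ++ wbar v).

From Stdlib Require Import Reals List ZArith Lia Lra.
From Coquelicot Require Import Coquelicot.

(* Evaluated at n, the word (f.g).bar(g.f) is F G F' G' with F' = bar f at n, G' = bar g at n.
   Since floor(-x) + floor(x) is 0 or -1, F F' is a product of conjugates of letters of f or
   their inverses, so nu(F F') is bounded independently of n, and likewise nu(G G').
   Property FM gives one element c such that c F c^-1 commutes with G for every n, and then
   nu(F G F^-1 G^-1) <= 4 nu(c). Writing F G F' G' = [F, G] . G (F F') G^-1 . G G' bounds its
   norm uniformly in n, so the norm divided by n tends to 0. *)

Section GroupFacts.

Context {G : Group}.
Implicit Types x y c : G.

Lemma mulKl x y : gmul (ginv x) (gmul x y) = y.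
Proof. rewrite gmulA, gmulVl, gmul1l. reflexivity. Qed.

Lemma mulKVr x y : gmul (gmul x y) (ginv y) = x.
Proof. rewrite <- gmulA, gmulVr, gmul1r. reflexivity. Qed.

Lemma mulVKr x y : gmul (gmul x (ginv y)) y = x.
Proof. rewrite <- gmulA, gmulVl, gmul1r. reflexivity. Qed.

Lemma inv_uniq x y : gmul x y = gone -> ginv x = y.
Proof.
  intro Hxy. rewrite <- (gmul1r _ (ginv x)), <- Hxy, gmulA, gmulVl, gmul1l. reflexivity.
Qed.

Lemma invK x : ginv (ginv x) = x.
Proof. apply inv_uniq, gmulVl. Qed.

Lemma invM x y : ginv (gmul x y) = gmul (ginv y) (ginv x).
Proof.
  apply inv_uniq. rewrite gmulA, <- (gmulA _ x y), gmulVr, gmul1r, gmulVr. reflexivity.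
Qed.

Lemma inv1 : ginv (@gone G) = gone.
Proof. apply inv_uniq, gmul1l. Qed.

Lemma gconj1 c : gconj c gone = gone.
Proof. unfold gconj. rewrite gmul1l, gmulVr. reflexivity. Qed.

Lemma gconjM c x y : gconj c (gmul x y) = gmul (gconj c x) (gconj c y).
Proof. unfold gconj. rewrite !gmulA, mulVKr. reflexivity. Qed.

Lemma gconjV c x : gconj c (ginv x) = ginv (gconj c x).
Proof. unfold gconj. rewrite !invM, invK, !gmulA. reflexivity. Qed.

Lemma gcommute_sym x y : gcommute x y -> gcommute y x.
Proof. unfold gcommute. auto. Qed.

Lemma gcommute1 y : gcommute gone y.
Proof. unfold gcommute. rewrite gmul1l, gmul1r. reflexivity. Qed.

Lemma gcommuteM x z y : gcommute x y -> gcommute z y -> gcommute (gmul x z) y.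
Proof.
  unfold gcommute. intros Hx Hz. rewrite <- gmulA, Hz, gmulA, Hx, <- gmulA. reflexivity.
Qed.

Lemma gcommuteV x y : gcommute x y -> gcommute (ginv x) y.
Proof.
  unfold gcommute. intro Hxy.
  transitivity (gmul (ginv x) (gmul (gmul y x) (ginv x))).
  - rewrite mulKVr. reflexivity.
  - rewrite <- Hxy, <- (gmulA _ x y), mulKl. reflexivity.
Qed.

Lemma iter_mulS x n :
  Nat.iter (S n) (gmul x) gone = gmul (Nat.iter n (gmul x) gone) x.
Proof.
  induction n as [|n IH]; simpl.
  - rewrite gmul1r, gmul1l. reflexivity.
  - simpl in IH. rewrite IH at 1. rewrite gmulA. reflexivity.
Qed.

Lemma gpowZ_of_nat x n : gpowZ x (Z.of_nat n) = Nat.iter n (gmul x) gone.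
Proof. destruct n; simpl; [reflexivity|]. rewrite SuccNat2Pos.id_succ. reflexivity. Qed.

Lemma gpowZ_opp_of_nat x n : gpowZ x (- Z.of_nat n)%Z = ginv (Nat.iter n (gmul x) gone).
Proof.
  destruct n; simpl.
  - rewrite inv1. reflexivity.
  - rewrite SuccNat2Pos.id_succ. reflexivity.
Qed.

Lemma gpowZ_succ x z : gpowZ x (z + 1) = gmul (gpowZ x z) x.
Proof.
  destruct (Z_le_gt_dec 0 z) as [Hz | Hz].
  - replace z with (Z.of_nat (Z.to_nat z)) by lia.
    replace (Z.of_nat (Z.to_nat z) + 1)%Z with (Z.of_nat (S (Z.to_nat z))) by lia.
    rewrite !gpowZ_of_nat, iter_mulS. reflexivity.
  - set (n := pred (Z.to_nat (- z))).
    replace z with (- Z.of_nat (S n))%Z by (unfold n; lia).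
    replace (- Z.of_nat (S n) + 1)%Z with (- Z.of_nat n)%Z by lia.
    rewrite !gpowZ_opp_of_nat. simpl Nat.iter at 2. rewrite invM, mulVKr. reflexivity.
Qed.

Lemma gpowZ_pred x z : gpowZ x (z - 1) = gmul (gpowZ x z) (ginv x).
Proof. replace z with ((z - 1) + 1)%Z at 2 by lia. rewrite gpowZ_succ, mulKVr. reflexivity. Qed.

Lemma gpowZ_add x a b : gpowZ x (a + b) = gmul (gpowZ x a) (gpowZ x b).
Proof.
  revert a. induction b as [|b IH|b IH] using Z.peano_ind; intro a.
  - rewrite Z.add_0_r. simpl. rewrite gmul1r. reflexivity.
  - rewrite <- !Z.add_1_r, Z.add_assoc, !gpowZ_succ, IH, gmulA. reflexivity.
  - rewrite <- !Z.sub_1_r, Z.add_sub_assoc, !gpowZ_pred, IH, gmulA. reflexivity.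
Qed.

Inductive generated (S : G -> Prop) : G -> Prop :=
| generated_base x : S x -> generated S x
| generated_one : generated S gone
| generated_mul x y : generated S x -> generated S y -> generated S (gmul x y)
| generated_inv x : generated S x -> generated S (ginv x).

Lemma generated_mono (S T : G -> Prop) :
  (forall x, S x -> T x) -> forall x, generated S x -> generated T x.
Proof. intros HST x Hx. induction Hx; [apply generated_base, HST | constructor ..]; assumption. Qed.

Lemma generated_gpowZ (S : G -> Prop) x z : generated S x -> generated S (gpowZ x z).
Proof.
  intro Hx.
  assert (Hiter : forall n, generated S (Nat.iter n (gmul x) gone))
    by (induction n; simpl; constructor; assumption).
  destruct z; simpl; [apply generated_one | apply Hiter | apply generated_inv, Hiter].
Qed.

Lemma generated_gconj (S : G -> Prop) c x :
  generated S x -> generated (fun y => exists s, S s /\ y = gconj c s) (gconj c x).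
Proof.
  intro Hx. induction Hx as [x Hx| |x y _ IHx _ IHy|x _ IH].
  - apply generated_base. exists x. auto.
  - rewrite gconj1. apply generated_one.
  - rewrite gconjM. apply generated_mul; assumption.
  - rewrite gconjV. apply generated_inv; assumption.
Qed.

Lemma gcommute_generated_r (T : G -> Prop) x :
  (forall y, T y -> gcommute x y) -> forall y, generated T y -> gcommute x y.
Proof.
  intros HxT y Hy. apply gcommute_sym.
  induction Hy; auto using gcommute_sym, gcommute1, gcommuteM, gcommuteV.
Qed.

Lemma gcommute_generated (S T : G -> Prop) :
  (forall x y, S x -> T y -> gcommute x y) ->
  forall x y, generated S x -> generated T y -> gcommute x y.
Proof.
  intros HST x y Hx Hy. apply (gcommute_generated_r T); [|exact Hy].
  intros y' Hy'. apply gcommute_sym, (gcommute_generated_r S); [|exact Hx].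
  intros x' Hx'. apply gcommute_sym, HST; assumption.
Qed.

End GroupFacts.

Section PseudoNorm.

Context {G : Group} (nu : G -> R).
Hypothesis Hnu : cinv_pseudonorm G nu.

Lemma nu_ge0 x : 0 <= nu x.
Proof. apply Hnu. Qed.

Lemma nu1 : nu gone = 0.
Proof. apply Hnu. Qed.

Lemma nuV x : nu (ginv x) = nu x.
Proof. symmetry. apply Hnu. Qed.

Lemma nuM_le x y : nu (gmul x y) <= nu x + nu y.
Proof. apply Hnu. Qed.

Lemma nu_gconj c x : nu (gconj c x) = nu x.
Proof. apply Hnu. Qed.

Lemma nu_insert_le x c y : nu (gmul x (gmul c y)) <= nu c + nu (gmul x y).
Proof.
  replace (gmul x (gmul c y)) with (gmul (gconj x c) (gmul x y))
    by (unfold gconj; rewrite !gmulA, mulVKr; reflexivity).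
  rewrite <- (nu_gconj x c). apply nuM_le.
Qed.

(* With a' = c a c^-1 commuting with b and k = a a'^-1, the commutator equals k (b k^-1 b^-1),
   and nu(k) <= 2 nu(c) as k = (a c a^-1) c^-1. *)
Lemma nu_commutator_le c a b :
  gcommute (gconj c a) b ->
  nu (gmul a (gmul b (gmul (ginv a) (ginv b)))) <= 4 * nu c.
Proof.
  intro Hc. set (a' := gconj c a) in *.
  set (k := gmul a (ginv a')).
  assert (Ha : a = gmul k a') by (unfold k; rewrite mulVKr; reflexivity).
  assert (Hcomm : gmul a (gmul b (gmul (ginv a) (ginv b))) = gmul k (gconj b (ginv k))).
  { rewrite Ha at 1 2. unfold gconj. rewrite invM, !gmulA.
    unfold gcommute in Hc. rewrite <- (gmulA _ k a' b), Hc, gmulA, mulKVr. reflexivity. }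
  assert (Hk : nu k <= 2 * nu c).
  { replace k with (gmul (gconj a c) (ginv c))
      by (unfold k, a', gconj; rewrite !invM, invK, !gmulA; reflexivity).
    pose proof (nuM_le (gconj a c) (ginv c)). rewrite nu_gconj, nuV in *. lra. }
  rewrite Hcomm. pose proof (nuM_le k (gconj b (ginv k))). rewrite nu_gconj, nuV in *. lra.
Qed.

Lemma nu_swap_le c a a' b b' :
  gcommute (gconj c a) b ->
  nu (gmul (gmul a b) (gmul a' b')) <= 4 * nu c + nu (gmul a a') + nu (gmul b b').
Proof.
  intro Hc.
  replace (gmul (gmul a b) (gmul a' b')) with
    (gmul (gmul a (gmul b (gmul (ginv a) (ginv b)))) (gmul (gconj b (gmul a a')) (gmul b b')))
    by (unfold gconj; rewrite !gmulA, !mulVKr; reflexivity).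
  pose proof (nu_commutator_le c a b Hc).
  pose proof (nuM_le (gmul a (gmul b (gmul (ginv a) (ginv b))))
                     (gmul (gconj b (gmul a a')) (gmul b b'))).
  pose proof (nuM_le (gconj b (gmul a a')) (gmul b b')).
  rewrite nu_gconj in *. lra.
Qed.

End PseudoNorm.

Lemma Int_part_opp_add (y : R) :
  (Int_part (- y) + Int_part y = 0 \/ Int_part (- y) + Int_part y = -1)%Z.
Proof.
  destruct (base_Int_part y), (base_Int_part (- y)).
  assert (IZR (Int_part (- y) + Int_part y) <= 0) as Hle%le_IZR by (rewrite plus_IZR; lra).
  assert (IZR (Int_part (- y) + Int_part y) > -2) as Hgt%lt_IZR by (rewrite plus_IZR; lra).
  lia.
Qed.

Lemma is_lim_seq_bounded_div_INR (v : nat -> R) (C : R) :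
  (forall n, 0 <= v n <= C) -> is_lim_seq (fun n => v n / INR n) 0.
Proof.
  intro Hv.
  assert (Hinv : forall n, 0 <= / INR n).
  { intros [|n].
    - simpl. rewrite Rinv_0. lra.
    - apply Rlt_le, Rinv_0_lt_compat, lt_0_INR. lia. }
  apply is_lim_seq_le_le with (u := fun _ => 0) (w := fun n => C * / INR n).
  - intro n. specialize (Hv n). specialize (Hinv n). unfold Rdiv. split.
    + apply Rmult_le_pos; lra.
    + apply Rmult_le_compat_r; lra.
  - apply is_lim_seq_const.
  - replace (Finite 0) with (Rbar_mult C (Rbar_inv p_infty)) by (simpl; f_equal; ring).
    apply is_lim_seq_scal_l, is_lim_seq_inv; [apply is_lim_seq_INR | discriminate].
Qed.

Section Words.

Context {G : Group}.

Lemma weval_app (a b : word G) n : weval (a ++ b) n = gmul (weval a n) (weval b n).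
Proof.
  induction a as [|p a IH]; simpl.
  - rewrite gmul1l. reflexivity.
  - rewrite IH, gmulA. reflexivity.
Qed.

Lemma wbar_app (a b : word G) : wbar (a ++ b) = wbar b ++ wbar a.
Proof. unfold wbar. rewrite map_app, rev_app_distr. reflexivity. Qed.

Lemma weval_generated (S : G -> Prop) (w : word G) n :
  (forall p, In p w -> generated S (fst p)) -> generated S (weval w n).
Proof.
  induction w as [|p w IH]; intro Hw; simpl.
  - apply generated_one.
  - apply generated_mul.
    + apply generated_gpowZ, Hw. left. reflexivity.
    + apply IH. intros q Hq. apply Hw. right. exact Hq.
Qed.

Definition letters_nu (nu : G -> R) (w : word G) : R :=
  fold_right (fun p acc => nu (fst p) + acc) 0 w.

(* The letter x^{[s n]} meets its partner x^{[-s n]}, whose product is 1 or x^-1. *)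
Lemma nu_weval_wbar_le (nu : G -> R) (Hnu : cinv_pseudonorm G nu) (w : word G) n :
  nu (gmul (weval w n) (weval (wbar w) n)) <= letters_nu nu w.
Proof.
  induction w as [|[x s] w IH]; simpl.
  - rewrite gmul1l, (nu1 nu Hnu). lra.
  - change (wbar ((x, s) :: w)) with (wbar w ++ (x, - s) :: nil).
    rewrite weval_app. simpl. rewrite gmul1r, <- gmulA, (gmulA _ (weval w n)).
    eapply Rle_trans; [apply (nu_insert_le nu Hnu)|].
    rewrite <- gpowZ_add, Ropp_mult_distr_l_reverse, Z.add_comm.
    assert (nu (gpowZ x (Int_part (- (s * INR n)) + Int_part (s * INR n))) <= nu x).
    { destruct (Int_part_opp_add (s * INR n)) as [-> | ->]; simpl.
      - rewrite (nu1 nu Hnu). apply (nu_ge0 nu Hnu).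
      - rewrite (nuV nu Hnu), gmul1r. lra. }
    lra.
Qed.

Lemma conj_union_incl (H : G -> Prop) (hs hs' : list G) x :
  incl hs hs' -> conj_union H hs x -> conj_union H hs' x.
Proof. intros Hincl (gi & h & Hin & Hh & Ex). exists gi, h. auto. Qed.

Lemma conj_prod_generated (H : G -> Prop) (l : list (G * G)%type) :
  List.Forall (fun p => H (snd p)) l -> generated (conj_union H (map fst l)) (conj_prod l).
Proof.
  induction l as [|[a b] l IH]; intro Hl; simpl.
  - apply generated_one.
  - inversion Hl as [|? ? Hb Hl']; subst. apply generated_mul.
    + apply generated_base. exists a, b. simpl. auto.
    + apply (generated_mono (conj_union H (map fst l))); [|auto].
      intro x. apply conj_union_incl. intros y Hy. right. exact Hy.
Qed.

Lemma word_letters_generated (H : G -> Prop) (w : word G) :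
  (forall x : G, nuH_finite G H x) ->
  exists hs, forall p, In p w -> generated (conj_union H hs) (fst p).
Proof.
  intro Hfin. induction w as [|p w [hs IH]].
  - exists nil. intros p [].
  - destruct (Hfin (fst p)) as (l & Hl & Ep).
    exists (map fst l ++ hs). intros q [<- | Hq].
    + rewrite Ep. apply (generated_mono (conj_union H (map fst l))).
      * intro x. apply conj_union_incl. intros y Hy. apply in_or_app. left. exact Hy.
      * apply conj_prod_generated. exact Hl.
    + apply (generated_mono (conj_union H hs)); [|auto].
      intro x. apply conj_union_incl. intros y Hy. apply in_or_app. right. exact Hy.
Qed.

Lemma FM_pair_conjugator (H : G -> Prop) (f g : word G) :
  FM_pair G H ->
  exists c, forall n, gcommute (gconj c (weval f n)) (weval g n).
Proof.
  intros (_ & Hfin & HD).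
  destruct (word_letters_generated H f Hfin) as [hsf Hf].
  destruct (word_letters_generated H g Hfin) as [hsg Hg].
  destruct (HD hsf) as [h0 Hh0]. destruct (Hh0 hsg) as [h Hh].
  exists (gconj h h0). intro n.
  apply (gcommute_generated
           (fun y => exists s, conj_union H hsf s /\ y = gconj (gconj h h0) s)
           (conj_union H hsg)).
  - intros x y (s & Hs & ->) Hy. apply Hh; assumption.
  - apply generated_gconj, weval_generated, Hf.
  - apply weval_generated, Hg.
Qed.

End Words.

Theorem lemma3p5 (G : Group) (HFM : satisfies_FM G) (nu : G -> R)
  (Hnu : cinv_pseudonorm G nu) (f g : word G) :
  wsim G nu (f ++ g) (g ++ f).
Proof.
  destruct HFM as [H HFM].
  destruct (FM_pair_conjugator H f g HFM) as [c Hc].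
  unfold wsim, wnorm_zero.
  apply is_lim_seq_bounded_div_INR with (C := 4 * nu c + letters_nu nu f + letters_nu nu g).
  intro n. split; [apply (nu_ge0 nu Hnu)|].
  rewrite wbar_app, !weval_app.
  pose proof (nu_weval_wbar_le nu Hnu f n).
  pose proof (nu_weval_wbar_le nu Hnu g n).
  pose proof (nu_swap_le nu Hnu c _ (weval (wbar f) n) _ (weval (wbar g) n) (Hc n)).
  lra.
Qed.
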